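(* In the standing setup with a single fluid, and with $t_{\mathrm b},\xi_{\mathrm b},\xi_0,t_0$ as in the time-interval setup, let $$b:=\max_{t\in[t_{\mathrm b},t_0]}\frac{\sqrt2\,|y_{\mathrm i}(t)|\,h(t)}{l}$$ and assume $b>0$. Then $$\Delta t_{\mathrm b0}\ \ge\ \frac{1}{2\sqrt{2\xi_0}}\,\frac{1}{b\,c\,l}\,(\xi_0-\xi_{\mathrm b}).$$
   Context: Standing setup. Fix real constants $c>0$ and $l>0$, a nonempty finite index set $A$, and constants $w_\alpha\in[-1,1]$ for $\alpha\in A$. Let $I\subseteq\mathbb{R}$ be an interval and let $x,y_{\mathrm r},y_{\mathrm i},h,z_\alpha$ ($\alpha\in A$) be real $C^1$ functions of $t\in I$ with $h>0$ and $z_\alpha\ge 0$. Define $\xi(t)=x(t)^2+\sum_{\beta\in A}\frac{1+w_\beta}{2}z_\beta(t)^2$. Assume that on $I$: $\dot x=\big[-x+4c\,y_{\mathrm r}y_{\mathrm i}+x\,\xi\big]h$, $\dot y_{\mathrm r}=\big[\xi\,y_{\mathrm r}-c\,x\,y_{\mathrm i}\big]h$, $\dot y_{\mathrm i}=\big[\xi\,y_{\mathrm i}+c\,x\,y_{\mathrm r}\big]h$, $\dot z_\alpha=\big[-\tfrac{1+w_\alpha}{2}+\xi\big]z_\alpha h$, $\dot h=-\xi h^2$, together with the constraints $x^2+4y_{\mathrm r}^2+\sum_{\beta\in A}z_\beta^2=1$ and $y_{\mathrm r}^2+y_{\mathrm i}^2=\frac{l^2}{2h^2}$. Single fluid: $A$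 has exactly one element; write $z$ and $w$ for $z_\alpha$ and $w_\alpha$. Time-interval setup: let $t_{\mathrm b}\in I$, $\xi_{\mathrm b}:=\xi(t_{\mathrm b})$, and let $\xi_0$ be a real number with $\xi_0>0$ and $\xi_{\mathrm b}\le\xi_0\le\frac{1+w}{2}$. Assume the set $\{t\in I:\ t\ge t_{\mathrm b},\ \xi(t)=\xi_0\}$ is nonempty and let $t_0$ be its minimum (so $\xi(t)\le\xi_0$ for all $t\in[t_{\mathrm b},t_0]$); put $\Delta t_{\mathrm b0}=t_0-t_{\mathrm b}$. (Physically, $\sqrt2\,|y_{\mathrm i}|h/l=|\cos(\phi/2f)|$, so $b$ measures the maximal displacement of the axion from the hilltop.) *)

From Stdlib Require Import Reals.
Open Scope R_scope.

Definition is_interval (I : R -> Prop) : Prop :=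
  forall a b c, I a -> I c -> a <= b -> b <= c -> I b.

Definition deriv_within (I : R -> Prop) (f : R -> R) (t d : R) : Prop :=
  limit1_in (fun s => (f s - f t) / (s - t)) (fun s => I s /\ s <> t) d t.

Definition cont_within (I : R -> Prop) (f : R -> R) (t : R) : Prop :=
  limit1_in f I (f t) t.

Definition C1_on (I : R -> Prop) (f : R -> R) : Prop :=
  exists f' : R -> R,
    (forall t, I t -> deriv_within I f t (f' t)) /\
    (forall t, I t -> cont_within I f' t).

Definition xi1 (w : R) (x z : R -> R) (t : R) : R :=
  x t ^ 2 + (1 + w) / 2 * z t ^ 2.

From Stdlib Require Import Reals Lra.
From Coquelicot Require Import Coquelicot.
Open Scope R_scope.

(* Along the flow, xi = x^2 + k z^2 with k = (1+w)/2 has derivative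
   2 h (xi^2 - x^2 - k^2 z^2) + 8 c h x yr yi, and the first term is nonpositive because
   xi^2 <= x^2 + k^2 z^2 whenever x^2 + z^2 <= 1.  Up to the first hitting time t0 we have
   xi <= xi0, so |x| <= sqrt xi0; the constraint gives |yr| <= 1/2 and the definition of b
   gives |yi| h <= b l / sqrt 2.  Hence xi' <= 2 sqrt (2 xi0) b c l on [tb, t0], and the
   mean value theorem bounds the time xi needs to climb from xi(tb) to xi0. *)

Lemma deriv_within_cont_within I f t d : deriv_within I f t d -> cont_within I f t.
Proof.
  intros Hd.
  assert (Hq : limit1_in (fun s => (f s - f t) / (s - t) * (s - t))
                 (fun s => I s /\ s <> t) (d * (t - t)) t).
  { apply limit_mul; [exact Hd|].
    apply limit_minus; [apply lim_x | exact (limit_free (fun _ => t) _ t t)]. }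
  rewrite Rminus_diag, Rmult_0_r in Hq.
  intros eps Heps. destruct (Hq eps Heps) as [a [Ha Hs]].
  exists a; split; [exact Ha|]. intros s [Is Ds].
  destruct (Req_dec s t) as [->|Hne].
  { simpl; unfold R_dist; rewrite Rminus_diag, Rabs_R0; exact Heps. }
  specialize (Hs s (conj (conj Is Hne) Ds)). simpl in *; unfold R_dist in *.
  replace (f s - f t) with ((f s - f t) / (s - t) * (s - t) - 0) by (field; lra).
  exact Hs.
Qed.

Lemma deriv_within_interior I f a b t d :
  is_interval I -> I a -> I b -> a < t < b ->
  deriv_within I f t d -> derivable_pt_lim f t d.
Proof.
  intros HI Ia Ib Ht Hd eps Heps. destruct (Hd eps Heps) as [r [Hr Hs]].
  assert (Hpos : 0 < Rmin r (Rmin (t - a) (b - t))) by (repeat apply Rmin_pos; lra).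
  exists (mkposreal _ Hpos). intros u Hu Hlt; simpl in Hlt.
  pose proof (Rmin_l r (Rmin (t - a) (b - t))). pose proof (Rmin_r r (Rmin (t - a) (b - t))).
  pose proof (Rmin_l (t - a) (b - t)). pose proof (Rmin_r (t - a) (b - t)).
  assert (Hu' : - (t - a) < u < b - t) by (split_Rabs; lra).
  specialize (Hs (t + u)). simpl in Hs; unfold R_dist in Hs.
  replace (t + u - t) with u in Hs by ring.
  apply Hs. split; [split|]; [apply (HI a (t + u) b); auto; lra | lra | lra].
Qed.

(* Composing with [clamp a b] turns the one-sided behaviour at the endpoints of [[a, b]]
   into two-sided continuity on all of [R], as required by the IVT and the MVT. *)
Definition clamp (a b s : R) : R := Rmax a (Rmin b s).

Lemma clamp_in a b s : a <= b -> a <= clamp a b s <= b.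
Proof. intros. unfold clamp, Rmax, Rmin. repeat destruct Rle_dec; lra. Qed.

Lemma clamp_id a b s : a <= s <= b -> clamp a b s = s.
Proof. intros. unfold clamp, Rmax, Rmin. repeat destruct Rle_dec; lra. Qed.

Lemma clamp_dist a b s u : a <= b -> Rabs (clamp a b s - clamp a b u) <= Rabs (s - u).
Proof. intros. unfold clamp, Rmax, Rmin. repeat destruct Rle_dec; split_Rabs; lra. Qed.

Section Segment.

Variables (I : R -> Prop) (f : R -> R) (a b : R).
Hypothesis Hab : a <= b.
Hypothesis Hseg : forall t, a <= t <= b -> I t.
Hypothesis Hcont : forall t, a <= t <= b -> cont_within I f t.

Lemma continuity_clamp_comp : continuity (fun s => f (clamp a b s)).
Proof.
  intros u eps Heps.
  destruct (Hcont (clamp a b u) (clamp_in a b u Hab) eps Heps) as [r [Hr Hs]].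
  exists r; split; [exact Hr|]. intros s [_ Ds]. simpl in *; unfold R_dist in *.
  apply Hs. split; [apply Hseg, clamp_in, Hab|].
  simpl; unfold R_dist. eapply Rle_lt_trans; [apply clamp_dist, Hab | exact Ds].
Qed.

Lemma le_until_first_hit y :
  f a <= y -> (forall t, a <= t <= b -> f t = y -> b <= t) ->
  forall s, a <= s <= b -> f s <= y.
Proof.
  intros Ha Hfirst s Hs. destruct (Rle_dec (f s) y) as [|Hgt]; [assumption|].
  set (g := fun u => f (clamp a b u) - y).
  assert (Cg : continuity g).
  { apply continuity_minus; [apply continuity_clamp_comp | apply continuity_const].
    intros ? ?; reflexivity. }
  destruct (IVT_cor g a s Cg (proj1 Hs)) as [u [Hu Eu]].
  { unfold g. rewrite !clamp_id by lra. nra. }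
  unfold g in Eu. rewrite clamp_id in Eu by lra.
  assert (b <= u) by (apply Hfirst; lra).
  assert (u = s) by lra. subst u. lra.
Qed.

Lemma increment_le_of_deriv_le f' M :
  (forall t, a < t < b -> derivable_pt_lim f t (f' t)) ->
  (forall t, a <= t <= b -> f' t <= M) ->
  f b - f a <= M * (b - a).
Proof.
  intros Hd HM. destruct (Req_dec a b) as [<-|Hne]; [lra|].
  destruct (MVT_gen (fun s => f (clamp a b s)) a b f') as [u [Hu Eu]];
    rewrite Rmin_left, Rmax_right in * by lra.
  - intros t Ht. apply (is_derive_ext_loc f); [|apply is_derive_Reals, Hd, Ht].
    apply (filter_imp (fun s => a < s /\ s < b)).
    + intros s Hs. rewrite clamp_id; lra.
    + apply (open_and _ _ (open_gt a) (open_lt b)). exact Ht.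
  - intros t _. apply continuity_clamp_comp.
  - rewrite !clamp_id in Eu by lra. rewrite Eu.
    apply Rmult_le_compat_r; [lra | apply HM, Hu].
Qed.

End Segment.

Lemma cont_within_xi1 I w x z t :
  cont_within I x t -> cont_within I z t -> cont_within I (xi1 w x z) t.
Proof.
  assert (Hsq : forall y, cont_within I y t -> limit1_in (fun s => y s ^ 2) I (y t ^ 2) t).
  { intros y Cy. simpl. repeat apply limit_mul; try assumption.
    exact (limit_free (fun _ => 1) _ t t). }
  intros Cx Cz. apply limit_plus; [apply Hsq, Cx|].
  apply limit_mul; [exact (limit_free (fun _ => (1 + w) / 2) _ t t) | apply Hsq, Cz].
Qed.

Lemma derivable_pt_lim_xi1 w x z t dx dz :
  derivable_pt_lim x t dx -> derivable_pt_lim z t dz ->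
  derivable_pt_lim (xi1 w x z) t (2 * x t * dx + (1 + w) / 2 * (2 * z t * dz)).
Proof.
  rewrite <- !is_derive_Reals; intros Hx Hz.
  replace (2 * x t * dx + (1 + w) / 2 * (2 * z t * dz)) with
    (plus (INR 2 * dx * x t ^ 1) ((1 + w) / 2 * (INR 2 * dz * z t ^ 1))) by (cbn; ring).
  exact (is_derive_plus _ _ _ _ _ (is_derive_pow _ 2 _ _ Hx)
           (is_derive_scal _ _ ((1 + w) / 2) _ (is_derive_pow _ 2 _ _ Hz))).
Qed.

Lemma sqr_weighted_sum_le u v k :
  0 <= u -> 0 <= v -> u + v <= 1 -> 0 <= k <= 1 -> (u + k * v) ^ 2 <= u + k ^ 2 * v.
Proof.
  intros Hu Hv Huv Hk.
  (* Cauchy-Schwarz gives (u + k v)^2 <= (u + v)(u + k^2 v), with defect u v (1 - k)^2. *)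
  assert (Hcs : (u + v) * (u + k ^ 2 * v) - (u + k * v) ^ 2 = u * v * (1 - k) ^ 2) by ring.
  assert (0 <= u * v * (1 - k) ^ 2) by (apply Rmult_le_pos; [apply Rmult_le_pos | apply pow2_ge_0]; lra).
  assert (0 <= u + k ^ 2 * v) by nra.
  nra.
Qed.

Lemma xi_rate_le_cross_term k c X Yr Yi Z H :
  0 <= k <= 1 -> 0 < H -> X ^ 2 + 4 * Yr ^ 2 + Z ^ 2 = 1 ->
  2 * X * ((- X + 4 * c * Yr * Yi + X * (X ^ 2 + k * Z ^ 2)) * H)
    + k * (2 * Z * ((- k + (X ^ 2 + k * Z ^ 2)) * Z * H))
  <= 8 * c * H * (X * Yr * Yi).
Proof.
  intros Hk HH Hcons.
  assert (Hsq := sqr_weighted_sum_le (X ^ 2) (Z ^ 2) k (pow2_ge_0 X) (pow2_ge_0 Z)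
                   ltac:(pose proof (pow2_ge_0 Yr); lra) Hk).
  assert (0 <= H * (X ^ 2 + k ^ 2 * Z ^ 2 - (X ^ 2 + k * Z ^ 2) ^ 2))
    by (apply Rmult_le_pos; lra).
  nra.
Qed.

Lemma cross_term_le c l b xi0 X Yr Yi H :
  0 < c -> 0 < l -> 0 < H -> 0 <= xi0 -> X ^ 2 <= xi0 -> X ^ 2 + 4 * Yr ^ 2 <= 1 ->
  sqrt 2 * Rabs Yi * H / l <= b ->
  8 * c * H * (X * Yr * Yi) <= 2 * sqrt (2 * xi0) * b * c * l.
Proof.
  intros Hc Hl HH Hxi0 HX HYr Hb.
  rewrite sqrt_mult by lra.
  set (S := sqrt 2) in *. set (Q := sqrt xi0).
  assert (HS : S * S = 2) by (apply sqrt_sqrt; lra).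
  assert (HX' : Rabs X <= Q).
  { rewrite <- (Rabs_pos_eq Q) by apply sqrt_pos. apply Rsqr_le_abs_0.
    unfold Q, Rsqr. rewrite sqrt_sqrt by lra. nra. }
  assert (HYr' : Rabs Yr <= 1 / 2).
  { rewrite <- (Rabs_pos_eq (1 / 2)) by lra. apply Rsqr_le_abs_0. unfold Rsqr.
    pose proof (pow2_ge_0 X). nra. }
  assert (HYi : S * (Rabs Yi * H) <= b * l).
  { apply (Rmult_le_reg_r (/ l)); [apply Rinv_0_lt_compat; lra|].
    replace (b * l * / l) with b by (field; lra). unfold Rdiv in Hb. nra. }
  assert (Habs : X * Yr * Yi <= Rabs X * Rabs Yr * Rabs Yi)
    by (rewrite <- !Rabs_mult; apply Rle_abs).
  pose proof (Rabs_pos X). pose proof (Rabs_pos Yr). pose proof (Rabs_pos Yi).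
  assert (HQ : 0 <= Q) by apply sqrt_pos.
  assert (Rabs X * Rabs Yr <= Q / 2) by nra.
  assert (Rabs X * Rabs Yr * (Rabs Yi * H) <= Q / 2 * (Rabs Yi * H))
    by (apply Rmult_le_compat_r; nra).
  assert (Hstep1 : 8 * c * H * (X * Yr * Yi) <= 8 * c * (Rabs X * Rabs Yr * (Rabs Yi * H))).
  { replace (8 * c * (Rabs X * Rabs Yr * (Rabs Yi * H)))
      with (8 * c * H * (Rabs X * Rabs Yr * Rabs Yi)) by ring.
    apply Rmult_le_compat_l; [nra | exact Habs]. }
  assert (Hstep2 : 2 * S * Q * c * (S * (Rabs Yi * H)) <= 2 * S * Q * c * (b * l)).
  { apply Rmult_le_compat_l; [|exact HYi].
    assert (0 <= S) by apply sqrt_pos. repeat apply Rmult_le_pos; lra. }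
  replace (2 * S * Q * c * (S * (Rabs Yi * H))) with (4 * c * Q * (Rabs Yi * H)) in Hstep2
    by (replace (4 * c * Q * (Rabs Yi * H)) with (2 * (S * S) * Q * c * (Rabs Yi * H)) by (rewrite HS; ring); ring).
  nra.
Qed.
Theorem lemma3
  (c l w : R) (I : R -> Prop) (x yr yi h z : R -> R)
  (tb xi0 t0 b : R)
  (Hc : 0 < c) (Hl : 0 < l) (Hw : -1 <= w <= 1)
  (HI : is_interval I)
  (Cx : C1_on I x) (Cyr : C1_on I yr) (Cyi : C1_on I yi)
  (Ch : C1_on I h) (Cz : C1_on I z)
  (Hh : forall t, I t -> 0 < h t)
  (Hz : forall t, I t -> 0 <= z t)
  (Dx : forall t, I t -> deriv_within I x t
     ((- x t + 4 * c * yr t * yi t + x t * xi1 w x z t) * h t))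
  (Dyr : forall t, I t -> deriv_within I yr t
     ((xi1 w x z t * yr t - c * x t * yi t) * h t))
  (Dyi : forall t, I t -> deriv_within I yi t
     ((xi1 w x z t * yi t + c * x t * yr t) * h t))
  (Dz : forall t, I t -> deriv_within I z t
     ((- ((1 + w) / 2) + xi1 w x z t) * z t * h t))
  (Dh : forall t, I t -> deriv_within I h t
     (- xi1 w x z t * h t ^ 2))
  (K1 : forall t, I t -> x t ^ 2 + 4 * yr t ^ 2 + z t ^ 2 = 1)
  (K2 : forall t, I t -> yr t ^ 2 + yi t ^ 2 = l ^ 2 / (2 * h t ^ 2))
  (Htb : I tb)
  (Hxi0 : 0 < xi0)
  (Hxib : xi1 w x z tb <= xi0)
  (Hxi0w : xi0 <= (1 + w) / 2)
  (Ht0 : I t0 /\ tb <= t0 /\ xi1 w x z t0 = xi0)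
  (Ht0min : forall t, I t -> tb <= t -> xi1 w x z t = xi0 -> t0 <= t)
  (Hbmax : (exists s, tb <= s <= t0 /\ b = sqrt 2 * Rabs (yi s) * h s / l) /\
           (forall s, tb <= s <= t0 -> sqrt 2 * Rabs (yi s) * h s / l <= b))
  (Hb : 0 < b) :
  t0 - tb >= 1 / (2 * sqrt (2 * xi0)) * (1 / (b * c * l)) * (xi0 - xi1 w x z tb).
Proof.
  destruct Ht0 as [It0 [Htbt0 Hxit0]].
  set (k := (1 + w) / 2).
  assert (Hseg : forall s, tb <= s <= t0 -> I s) by (intros s Hs; apply (HI tb s t0); tauto).
  assert (Cxi : forall s, tb <= s <= t0 -> cont_within I (xi1 w x z) s).
  { intros s Hs. apply cont_within_xi1; eapply deriv_within_cont_within; [apply Dx | apply Dz];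
      apply Hseg, Hs. }
  assert (Hbelow : forall s, tb <= s <= t0 -> xi1 w x z s <= xi0).
  { apply (le_until_first_hit I); auto. intros t Ht. apply Ht0min; [apply Hseg, Ht | lra]. }
  set (M := 2 * sqrt (2 * xi0) * b * c * l).
  assert (Hincr : xi1 w x z t0 - xi1 w x z tb <= M * (t0 - tb)).
  { apply (increment_le_of_deriv_le I _ tb t0 Htbt0 Hseg Cxi
      (fun s => 2 * x s * ((- x s + 4 * c * yr s * yi s + x s * xi1 w x z s) * h s)
                + k * (2 * z s * ((- k + xi1 w x z s) * z s * h s)))).
    - intros s Hs. apply derivable_pt_lim_xi1;
        [apply (deriv_within_interior I x tb t0) | apply (deriv_within_interior I z tb t0)];
        auto; [apply Dx | apply Dz]; apply Hseg; lra.
    - intros s Hs. assert (Is := Hseg s Hs).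
      pose proof (Hbelow s Hs) as Hxis. unfold xi1 in Hxis |- *. fold k in Hxis |- *.
      pose proof (K1 s Is). pose proof (pow2_ge_0 (z s)). pose proof (pow2_ge_0 (yr s)).
      assert (0 <= k * z s ^ 2) by (unfold k; apply Rmult_le_pos; lra).
      eapply Rle_trans; [apply xi_rate_le_cross_term; auto; unfold k; lra|].
      apply cross_term_le; auto; try lra. apply (proj2 Hbmax), Hs. }
  assert (Hsqrt : 0 < sqrt (2 * xi0)) by (apply sqrt_lt_R0; lra).
  assert (HM : 0 < M) by (unfold M; repeat apply Rmult_lt_0_compat; lra).
  apply Rle_ge. replace (1 / (2 * sqrt (2 * xi0)) * (1 / (b * c * l)) * (xi0 - xi1 w x z tb))
    with ((xi0 - xi1 w x z tb) / M) by (unfold M; field; repeat split; lra).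
  apply Rle_div_l; [exact HM | lra].
Qed.
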